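(* Let $N\ge 2$ be an integer. For $k\in\mathbb{Z}$ and arguments $(u,v)$ let $C_k(u,v)\in\mathbb{C}[y,z]^N$ be the column vector whose $i$-th entry ($i=1,\dots,N$, counted from the top) is $p_{k+2(N-i)}(u,v)$. Then (a) $\det\big[C_{-N+2}(y,z),C_{-N+3}(y,z),\dots,C_0(y,z),C_1(y,z)\big]=\phi_N(y,z)$; (b) $\det\big[C_{-N+2}(y/q,z),C_{-N+3}(y,z),\dots,C_1(y,z)\big]=\phi_N(y/q,z)$; (c) $\det\big[C_{-N+2}(y,z/q),C_{-N+3}(y,z),\dots,C_1(y,z)\big]=\phi_N(y,z/q)$; (d) $\det\big[C_{-N+3}(y/q,z),C_{-N+3}(y,z),C_{-N+4}(y,z),\dots,C_1(y,z)\big]=(1-q)\frac{y}{q}\,\phi_N(y/q,z)$; (e) $\det\big[C_{-N+3}(y,z/q),C_{-N+3}(y,z),C_{-N+4}(y,z),\dots,C_1(y,z)\big]=(1-q)\frac{z}{q}\,\phi_N(y,z/q)$; (f) $\det\big[C_{-N+3}(y,z/q),C_{-N+3}(y/q,z),C_{-N+4}(y,z),\dots,C_1(y,z)\big]=\frac{1-q}{q}(z-y)\,\phi_N(y/q,z/q)$. In (b),(c) the $j$-th column for $2\le j\le N$ is $C_{-N+j+1}(y,z)$; in (d),(e) likewise for $2\le j\le N$; in (f) the $j$-th column for $3\le j\le N$ is $C_{-N+j+1}(y,z)$.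
   Context: $q$ is a fixed nonzero complex constant that is not a root of unity; $y,z$ are variables. For $k\in\mathbb{Z}$ the polynomials $p_k(y,z)$ are defined by the generating function $\sum_{n\ge 0}p_n(y,z)t^n=\frac{(-(1-q)t;q)_\infty}{((1-q)yt;q)_\infty((1-q)zt;q)_\infty}$, with $(a;q)_\infty=\prod_{i\ge0}(1-aq^i)$, and $p_k=0$ for $k<0$; equivalently $p_n(y,z)=(1-q)^n\sum_{a+b+c=n}\frac{y^a z^b q^{c(c-1)/2}}{(q;q)_a(q;q)_b(q;q)_c}$ with $(q;q)_m=\prod_{j=1}^m(1-q^j)$. For $N>0$, $\phi_N(y,z)=\det\big(p_{N-2i+j+1}(y,z)\big)_{i,j=1}^N$. *)

From HB Require Import structures.
From mathcomp Require Import all_boot all_order all_algebra.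
From mathcomp Require Import complex reals.
Set Implicit Arguments. Unset Strict Implicit. Unset Printing Implicit Defensive.
Import Order.TTheory GRing.Theory Num.Theory.
Local Open Scope ring_scope.

Definition qpoch (C : fieldType) (q : C) (m : nat) : C :=
  \prod_(1 <= j < m.+1) (1 - q ^+ j).

Definition pn (C : fieldType) (q : C) (n : nat) (y z : C) : C :=
  (1 - q) ^+ n *
  \sum_(a < n.+1) \sum_(b < (n - a).+1)
     (y ^+ a * z ^+ b * q ^+ 'C(n - a - b, 2)
      / (qpoch q a * qpoch q b * qpoch q (n - a - b))).

Definition pk (C : fieldType) (q : C) (k : int) (y z : C) : C :=
  match k with
  | Posz n => pn q n y z
  | Negz _ => 0
  end.

(* phi_N(y,z) = det (p_{N-2i+j+1})_{i,j=1..N}; with 0-based i,j the index is N-2i+j *)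
Definition phi (C : fieldType) (q : C) (N : nat) (y z : C) : C :=
  \det (\matrix_(i < N, j < N) pk q (N%:Z - 2 * (i : nat)%:Z + (j : nat)%:Z) y z).

(* C_k(u,v): column vector whose i-th entry (1-based) is p_{k+2(N-i)}(u,v);
   with 0-based i the index is k + 2(N-1-i). *)
Definition Ccol (C : fieldType) (q : C) (N : nat) (k : int) (u v : C) : 'cV[C]_N :=
  \col_(i < N) pk q (k + 2 * (N%:Z - 1 - (i : nat)%:Z)) u v.

Definition mxcols (C : fieldType) (N : nat) (cols : 'I_N -> 'cV[C]_N) : 'M[C]_N :=
  \matrix_(i < N, j < N) cols j i 0.

(* the standard column in position j (0-based): C_{-N+(j+1)+1}(y,z) *)
Definition stdcol (C : fieldType) (q : C) (N : nat) (y z : C) (j : 'I_N) : 'cV[C]_N :=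
  Ccol q N ((j : nat)%:Z + 2 - N%:Z) y z.
Arguments stdcol [C] q N y z j.

From HB Require Import structures.
From mathcomp Require Import all_boot all_order all_algebra.
From mathcomp Require Import ring zify.
From mathcomp Require Import complex reals.
(* Both denominators of the generating function satisfy
   1/((1-q)(y/q)t;q)_oo = 1/(1 - (1-q)(y/q)t) * 1/((1-q)yt;q)_oo, whence
   p_k(y,z) = p_k(y/q,z) - (1-q)(y/q) p_{k-1}(y/q,z), and likewise in z.
   The (i,j) entry of the matrix of phi_N(u,v) is p_{r_i + j}(u,v), so
   subtracting (1-q)(y/q) times each column from the next one, a unitriangular
   change of columns, turns the columns at (y/q,z) into columns at (y,z)
   without changing the determinant; this gives (a)-(c).  In (d)-(f) the first
   column of the given matrix is a combination of the first two columns of such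
   a transformed matrix, with the stated prefactor as coefficient of the first. *)

Set Implicit Arguments. Unset Strict Implicit. Unset Printing Implicit Defensive.
Import Order.TTheory GRing.Theory Num.Theory.
Local Open Scope ring_scope.

Lemma sum_triangleC (V : nmodType) n (F : nat -> nat -> V) :
  \sum_(a < n.+1) \sum_(b < (n - a).+1) F a b
  = \sum_(a < n.+1) \sum_(b < (n - a).+1) F b a.
Proof.
have triangle (G : nat -> nat -> V) : \sum_(a < n.+1) \sum_(b < (n - a).+1) G a b
    = \sum_(a < n.+1) \sum_(b < n.+1 | (a + b <= n)%N) G a b.
  apply: eq_bigr => a _; rewrite (big_ord_widen n.+1 (G a)) ?ltnS ?leq_subr //.
  by apply: eq_bigl => b; have := ltn_ord a; lia.
rewrite triangle (triangle (fun a b => F b a)) (exchange_big_dep xpredT) //=.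
by apply: eq_bigr => b _; apply: eq_bigl => a; rewrite addnC.
Qed.

Section QExponentialCoefficients.
Variables (C : fieldType) (q : C).
Hypothesis q_neq0 : q != 0.
Hypothesis q_not_root1 : forall n : nat, (0 < n)%N -> q ^+ n != 1.

Lemma qpochS n : qpoch q n.+1 = qpoch q n * (1 - q ^+ n.+1).
Proof. by rewrite /qpoch big_nat_recr. Qed.

Lemma qpoch_neq0 n : qpoch q n != 0.
Proof.
elim: n => [|n IH]; first by rewrite /qpoch big_geq ?oner_eq0.
by rewrite qpochS mulf_neq0 // subr_eq0 eq_sym q_not_root1.
Qed.

(* The coefficients of t^n in 1/((1-q)xt;q)_oo and in (-(1-q)t;q)_oo. *)
Definition qexp_coef n x := (1 - q) ^+ n * x ^+ n / qpoch q n.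
Definition qExp_coef n := (1 - q) ^+ n * q ^+ 'C(n, 2) / qpoch q n.

Lemma qexp_coef0 x : qexp_coef 0 x = 1.
Proof. by rewrite /qexp_coef /qpoch big_geq // !expr0 divr1 mulr1. Qed.

Lemma qexp_coefS n x :
  qexp_coef n.+1 x = qexp_coef n.+1 (x / q) - (1 - q) * (x / q) * qexp_coef n (x / q).
Proof.
rewrite /qexp_coef qpochS !exprS expr_div_n.
have Qn_neq0 := qpoch_neq0 n.
have Qn1_neq0 : 1 - q * q ^+ n != 0 by rewrite subr_eq0 eq_sym -exprS q_not_root1.
have qn_neq0 : q ^+ n != 0 by rewrite expf_neq0.
by field; rewrite Qn_neq0 Qn1_neq0 qn_neq0 q_neq0.
Qed.

Lemma pn_qexp_conv n y z : pn q n y z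
  = \sum_(a < n.+1) qexp_coef a y
      * \sum_(b < (n - a).+1) qexp_coef b z * qExp_coef (n - a - b).
Proof.
rewrite /pn big_distrr; apply: eq_bigr => a _; rewrite !big_distrr; apply: eq_bigr => b _.
have ab : (a + b <= n)%N by have := ltn_ord a; have := ltn_ord b; lia.
have -> : (1 - q) ^+ n = (1 - q) ^+ a * (1 - q) ^+ b * (1 - q) ^+ (n - a - b).
  by rewrite -!exprD; congr (_ ^+ _); lia.
rewrite /qexp_coef /qExp_coef /= !invfM; ring.
Qed.

Lemma sum_qexp_coef_divq (H : nat -> C) n x :
  \sum_(a < n.+2) qexp_coef a x * H (n.+1 - a)%N
  = \sum_(a < n.+2) qexp_coef a (x / q) * H (n.+1 - a)%N
    - (1 - q) * (x / q) * \sum_(a < n.+1) qexp_coef a (x / q) * H (n - a)%N.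
Proof.
rewrite big_ord_recl [in RHS]big_ord_recl !qexp_coef0 mulr_sumr -addrA -sumrB; congr (_ + _).
by apply: eq_bigr => a _; rewrite /bump /= subSS qexp_coefS; ring.
Qed.

Lemma pkC (k : int) u v : pk q k u v = pk q k v u.
Proof.
case: k => [n|//] /=; rewrite /pn (sum_triangleC n (fun a b => u ^+ a * v ^+ b
  * q ^+ 'C(n - a - b, 2) / (qpoch q a * qpoch q b * qpoch q (n - a - b)))).
congr (_ * _).
apply: eq_bigr => a _; apply: eq_bigr => b _.
by rewrite subnAC [u ^+ b * _]mulrC [qpoch q b * _]mulrC.
Qed.

Lemma pk_divq_l (k : int) u v :
  pk q k u v = pk q k (u / q) v - (1 - q) * (u / q) * pk q (k - 1) (u / q) v.
Proof.
case: k => [[|n]|m].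
- by rewrite /= !pn_qexp_conv !big_ord1 !qexp_coef0 mulr0 subr0.
- rewrite -predn_int //= !pn_qexp_conv.
  exact: (sum_qexp_coef_divq (fun m => \sum_(b < m.+1) qexp_coef b v * qExp_coef (m - b))).
- by rewrite /= mulr0 subr0.
Qed.

Lemma pk_divq_r (k : int) u v :
  pk q k u v = pk q k u (v / q) - (1 - q) * (v / q) * pk q (k - 1) u (v / q).
Proof. by rewrite ![pk q _ u _]pkC pk_divq_l. Qed.

End QExponentialCoefficients.

Section ColumnOperations.
Variable R : comPzRingType.

Lemma det_subr_prev_cols n (F : 'I_n -> nat -> R) a m :
  \det (\matrix_(i, j < n) if (m < j)%N then F i j - a * F i j.-1 else F i j)
  = \det (\matrix_(i, j < n) F i j).
Proof.
set A := \matrix_(i, j) F i j.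
pose S : 'M[R]_n := \matrix_(k, j) ((m < j)%N && (k.+1 == j))%:R.
have S_shift i j : \sum_k A i k * S k j = if (m < j)%N then F i j.-1 else 0.
  under eq_bigr do rewrite !mxE.
  case: ifP => mj; last first.
    by rewrite big1 // => k _; rewrite mulr0.
  have j1 : (j.-1 < n)%N by have := ltn_ord j; lia.
  rewrite (bigD1 (Ordinal j1)) //= prednK ?eqxx ?mulr1; last by lia.
  rewrite big1 ?addr0 // => k k_neq /=.
  suff /negbTE-> : k.+1 != j :> nat by rewrite mulr0.
  by apply: contra k_neq => /eqP kj; apply/eqP/val_inj => /=; lia.
have -> : \matrix_(i, j) (if (m < j)%N then F i j - a * F i j.-1 else F i j)
    = A *m (1%:M - a *: S).
  apply/matrixP => i j; rewrite mulmxBr mulmx1 -scalemxAr.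
  by rewrite !mxE S_shift; case: ifP; rewrite ?mulr0 ?subr0.
have detU : \det (1%:M - a *: S) = 1.
  rewrite -det_tr det_trig; last first.
    apply/is_trig_mxP => i j ij; rewrite !mxE.
    have [ji jSi] : (j == i :> nat) = false /\ (j.+1 == i) = false by split; lia.
    by rewrite -val_eqE ji jSi andbF mulr0 subr0.
  by rewrite big1 // => i _; rewrite !mxE eqxx eqn_leq ltnn andbF mulr0 subr0.
by rewrite det_mulmx detU mulr1.
Qed.

Lemma det_add_col n (A : 'M[R]_n) j0 k0 c d : k0 != j0 ->
  \det (\matrix_(i, j) if j == j0 then c * A i j0 + d * A i k0 else A i j)
  = c * \det A.
Proof.
move=> k0_neq_j0.
set A0 := \matrix_(i, j) if j == j0 then A i k0 else A i j.
have A0_alt : \det A0 = 0.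
  rewrite -det_tr (determinant_alternate k0_neq_j0) // => i.
  by rewrite !mxE eqxx (negbTE k0_neq_j0).
rewrite -det_tr (determinant_multilinear (B := A^T) (C := A0^T) (i0 := j0) (b := c) (c := d)).
- by rewrite !det_tr A0_alt mulr0 addr0.
- by apply/rowP => j; rewrite !mxE eqxx.
- by apply/matrixP => i j; rewrite !mxE eq_sym (negbTE (neq_lift _ _)).
- by apply/matrixP => i j; rewrite !mxE eq_sym (negbTE (neq_lift _ _)).
Qed.

Lemma det_col0_sub N (r : 'I_N -> int) (g f : int -> R) a :
  (forall k, f k = g k - a * g (k - 1)) ->
  \det (\matrix_(i, j < N) if (j : nat) == 0%N then g (r i) else f (r i + (j : nat)%:Z))
  = \det (\matrix_(i, j < N) g (r i + (j : nat)%:Z)).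
Proof.
move=> fE; rewrite -(det_subr_prev_cols (fun i (j : nat) => g (r i + j%:Z)) a 0).
congr (\det _); apply/matrixP => i j; rewrite !mxE.
case: j => [[|j] /= _]; first by rewrite addr0.
by rewrite fE; congr (_ - _ * g _); lia.
Qed.

Lemma det_col0_succ n (r : 'I_n.+2 -> int) (g f : int -> R) a :
  (forall k, f k = g k - a * g (k - 1)) ->
  \det (\matrix_(i, j) if (j : nat) == 0%N then g (r i + 1) else f (r i + (j : nat)%:Z))
  = a * \det (\matrix_(i, j) g (r i + (j : nat)%:Z)).
Proof.
move=> fE; rewrite -(det_col0_sub r fE) -(det_add_col _ a 1 (j0 := ord0) (k0 := lift ord0 ord0)) //.
congr (\det _); apply/matrixP => i j; rewrite !mxE.
case: j => [[|j] _] //=.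
by rewrite fE /bump /= addrK; ring.
Qed.

Lemma det_col01 n (r : 'I_n.+2 -> int) (e g h f : int -> R) a b :
  (forall k, g k = e k - b * e (k - 1)) ->
  (forall k, f k = g k - a * g (k - 1)) ->
  (forall k, h k = e k - a * e (k - 1)) ->
  \det (\matrix_(i, j) if (j : nat) == 0%N then h (r i + 1)
                       else if (j : nat) == 1%N then g (r i + 1)
                       else f (r i + (j : nat)%:Z))
  = (b - a) * \det (\matrix_(i, j) e (r i + (j : nat)%:Z)).
Proof.
move=> gE fE hE; rewrite -(det_col0_sub r gE).
rewrite -(det_subr_prev_cols (fun i (j : nat) => if j == 0%N then e (r i) else g (r i + j%:Z)) a 1).
rewrite -(det_add_col _ (b - a) 1 (j0 := ord0) (k0 := lift ord0 ord0)) //.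
congr (\det _); apply/matrixP => i j; rewrite !mxE.
case: j => [[|[|j]] _] //=.
  by rewrite hE gE /bump /= addrK; ring.
by rewrite fE; congr (g _ - a * g _); lia.
Qed.

End ColumnOperations.

Section PhiColumns.
Variables (C : fieldType) (q : C) (y z : C).

Lemma det_mxcols_stdcol N : \det (mxcols (stdcol q N y z)) = phi q N y z.
Proof. by congr (\det _); apply/matrixP => i j; rewrite !mxE; congr pk; lia. Qed.

Lemma det_mxcols_Ccol0 {N} u v a :
  (forall k, pk q k y z = pk q k u v - a * pk q (k - 1) u v) ->
  \det (mxcols (fun j : 'I_N =>
      if (j : nat) == 0%N then Ccol q N (2 - N%:Z) u v else stdcol q N y z j))
  = phi q N u v.
Proof.
move=> E; rewrite /phi -(det_col0_sub (fun i : 'I_N => N%:Z - 2 * (i : nat)%:Z) E).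
by congr (\det _); apply/matrixP => i j; rewrite !mxE; case: ifP => _; rewrite !mxE; congr pk; lia.
Qed.

Lemma det_mxcols_Ccol0_succ {n} u v a :
  (forall k, pk q k y z = pk q k u v - a * pk q (k - 1) u v) ->
  \det (mxcols (fun j : 'I_n.+2 =>
      if (j : nat) == 0%N then Ccol q n.+2 (3 - n.+2%:Z) u v else stdcol q n.+2 y z j))
  = a * phi q n.+2 u v.
Proof.
move=> E; rewrite /phi -(det_col0_succ (fun i : 'I_n.+2 => n.+2%:Z - 2 * (i : nat)%:Z) E).
by congr (\det _); apply/matrixP => i j; rewrite !mxE; case: ifP => _; rewrite !mxE; congr pk; lia.
Qed.

Lemma det_mxcols_Ccol01 {n} y' z' a b :
  (forall k v, pk q k y v = pk q k y' v - a * pk q (k - 1) y' v) ->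
  (forall k u, pk q k u z = pk q k u z' - b * pk q (k - 1) u z') ->
  \det (mxcols (fun j : 'I_n.+2 =>
      if (j : nat) == 0%N then Ccol q n.+2 (3 - n.+2%:Z) y z'
      else if (j : nat) == 1%N then Ccol q n.+2 (3 - n.+2%:Z) y' z
      else stdcol q n.+2 y z j))
  = (b - a) * phi q n.+2 y' z'.
Proof.
move=> Ey Ez; rewrite /phi -(det_col01 (fun i : 'I_n.+2 => n.+2%:Z - 2 * (i : nat)%:Z)
  (Ez^~ y') (Ey^~ z) (Ey^~ z')).
congr (\det _); apply/matrixP => i j; rewrite !mxE.
by case: ifP => _; [|case: ifP => _]; rewrite !mxE; congr pk; lia.
Qed.

End PhiColumns.

Theorem lemma1 (R : realType) (q : R[i]) (hq0 : q != 0)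
    (hq : forall n : nat, (0 < n)%N -> q ^+ n != 1)
    (N : nat) (hN : (2 <= N)%N) (y z : R[i]) :
  (
   (* (a) *)
   \det (mxcols (stdcol q N y z)) = phi q N y z) /\ (
   (* (b) *)
   \det (mxcols (fun j : 'I_N =>
      if (j : nat) == 0%N then Ccol q N (2 - N%:Z) (y / q) z else stdcol q N y z j))
     = phi q N (y / q) z) /\ (
   (* (c) *)
   \det (mxcols (fun j : 'I_N =>
      if (j : nat) == 0%N then Ccol q N (2 - N%:Z) y (z / q) else stdcol q N y z j))
     = phi q N y (z / q)) /\ (
   (* (d) *)
   \det (mxcols (fun j : 'I_N =>
      if (j : nat) == 0%N then Ccol q N (3 - N%:Z) (y / q) z else stdcol q N y z j))
     = (1 - q) * (y / q) * phi q N (y / q) z) /\ (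
   (* (e) *)
   \det (mxcols (fun j : 'I_N =>
      if (j : nat) == 0%N then Ccol q N (3 - N%:Z) y (z / q) else stdcol q N y z j))
     = (1 - q) * (z / q) * phi q N y (z / q)) /\ (
   (* (f) *)
   \det (mxcols (fun j : 'I_N =>
      if (j : nat) == 0%N then Ccol q N (3 - N%:Z) y (z / q)
      else if (j : nat) == 1%N then Ccol q N (3 - N%:Z) (y / q) z
      else stdcol q N y z j))
     = (1 - q) / q * (z - y) * phi q N (y / q) (z / q)).
Proof.
case: N hN => [|[|n]] // _.
have Ey k v := pk_divq_l hq0 hq k y v.
have Ez k u := pk_divq_r hq0 hq k u z.
split; first exact: det_mxcols_stdcol.
split; first exact: det_mxcols_Ccol0 (Ey^~ z).
split; first exact: det_mxcols_Ccol0 (Ez^~ y).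
split; first exact: det_mxcols_Ccol0_succ (Ey^~ z).
split; first exact: det_mxcols_Ccol0_succ (Ez^~ y).
rewrite (det_mxcols_Ccol01 Ey Ez); congr (_ * _); ring.
Qed.
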